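(* Let $q,r,\nu$ be positive integers with $q<\nu\le r$. Then the equation $\mathcal{M}^0(z)C=I_q$ (for all $z$) admits a solution $C\in\mathbb{R}^{\nu r\times q}$ not depending on $z$, and the set of such constant solutions is an affine space of dimension $(\nu-q)rq$.
   Context: $u(z)=(1,\dots,z^{q-1})^\top$, $w(z)=(1,\dots,z^{r-1})$, $M(z)=u(z)w(z)\in\mathbb{C}^{q\times r}$, and $\mathcal{M}^0(z)=(M(z),M'(z),\dots,M^{(\nu-1)}(z))\in\mathbb{C}^{q\times\nu r}$, derivatives taken in $z$. *)

From HB Require Import structures.
From mathcomp Require Import all_boot all_order all_algebra.
From mathcomp Require Import complex.
From mathcomp Require Import reals.
Set Implicit Arguments.
Unset Strict Implicit.
Unset Printing Implicit Defensive.
Import Order.TTheory GRing.Theory Num.Theory.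
Local Open Scope ring_scope.

Definition upoly (F : nzRingType) (q : nat) : 'cV[{poly F}]_q :=
  \col_(i < q) 'X^i.
Definition wpoly (F : nzRingType) (r : nat) : 'rV[{poly F}]_r :=
  \row_(j < r) 'X^j.
Definition Mpoly (F : comNzRingType) (q r : nat) : 'M[{poly F}]_(q, r) :=
  upoly F q *m wpoly F r.

Definition Mder (F : comNzRingType) (q r k : nat) (z : F) : 'M[F]_(q, r) :=
  map_mx (fun p : {poly F} => (p^`(k)).[z]) (Mpoly F q r).

(* M^0(z) = (M(z), M'(z), ..., M^(nu-1)(z)) in F^(q x nu r):
   row i of M^0(z) is the concatenation of the rows i of M^(0)(z), ...,
   M^(nu-1)(z); i.e. entry (i, k * r + l) is M^(k)(z) i l
   (mxvec lists the entries of a nu x r matrix row-major, cf. mxvecE). *)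
Definition M0 (F : comNzRingType) (q r nu : nat) (z : F) : 'M[F]_(q, nu * r) :=
  \matrix_(i < q) mxvec (\matrix_(k < nu, l < r) Mder q r k z i l).

Definition const_solution (R : rcfType) (q r nu : nat) (C : 'M[R]_(nu * r, q)) :=
  forall z : R[i], M0 q r nu z *m map_mx (fun x : R => x%:C)%C C = 1%:M.

Definition affine_of_dim (R : fieldType) (m n d : nat) (S : 'M[R]_(m, n) -> Prop) :=
  exists (C0 : 'M[R]_(m, n)) (V : {vspace 'M[R]_(m, n)}),
    \dim V = d /\ forall C, S C <-> C - C0 \in V.
Arguments const_solution {R} q r nu C.

From HB Require Import structures.
From mathcomp Require Import all_boot all_order all_algebra.
From mathcomp Require Import complex.
From mathcomp Require Import reals.
From mathcomp Require Import zify.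
Import GRing.Theory Num.Theory.
Local Open Scope ring_scope.

(* Column j of C encodes nu polynomials a_k = sum_l C_(k r + l, j) X^l of size at most r,
   and entry (i, j) of M^0(z) C is the value at z of Q_i = sum_k (a_k X^i)^(k).  By the
   Leibniz rule Q_i = sum_t e_t (X^i)^(t) with e_t = sum_(k >= t) binom(k, t) a_k^(k - t).
   For i < q this is a triangular system in e_0, ..., e_(q-1) with diagonal entries i!,
   and e_t = a_t + (terms in a_k, k > t) is triangular in a_0, ..., a_(q-1) once the
   a_k with k >= q are fixed.  So the solutions are parametrised exactly by the
   (nu - q) r q coefficients of a_q, ..., a_(nu-1) in the q columns; r >= q guarantees
   that the forced e_t, of size at most t + 1, can be realised. *)

Lemma derivnM (R : nzRingType) (p q : {poly R}) n :
  (p * q)^`(n) = \sum_(t < n.+1) (p^`(n - t) * q^`(t)) *+ 'C(n, t).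
Proof.
elim: n => [|n IH]; first by rewrite big_ord1 !derivn0.
rewrite derivnS IH raddf_sum /=.
under eq_bigr => t _.
  rewrite derivMn derivM -!derivnS -subSn; last by rewrite -ltnS.
  rewrite mulrnDl.
over.
rewrite big_split /= [in RHS]big_ord_recl /=.
under [in RHS]eq_bigr => t _ do rewrite /bump /= binS mulrnDr subSS.
rewrite [in RHS]big_split /= addrA; congr (_ + _).
by rewrite big_ord_recl /= big_ord_recr /= !bin0 bin_small // mulr0n addr0.
Qed.

Lemma size_derivn {R : nzSemiRingType} (p : {poly R}) n : (size p^`(n) <= size p)%N.
Proof.
apply/leq_sizeP => j hj; rewrite coef_derivn nth_default ?mul0rn //.
exact: leq_trans hj (leq_addl _ _).
Qed.

Lemma size_polyMn {R : nzSemiRingType} (p : {poly R}) n : (size (p *+ n) <= size p)%N.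
Proof. by apply/leq_sizeP => j hj; rewrite coefMn nth_default ?mul0rn. Qed.

Lemma poly_all_roots_eq0 (R : numDomainType) (p : {poly R}) :
  (forall z, p.[z] = 0) -> p = 0.
Proof.
move=> p0; apply/eqP; apply: contraT => /max_poly_roots.
move=> /(_ [seq n%:R | n <- iota 0 (size p)]); rewrite size_map size_iota ltnn.
apply; first by apply/allP => x _; rewrite /root p0.
by rewrite map_inj_uniq ?iota_uniq // => m n /eqP; rewrite eqr_nat => /eqP.
Qed.

Section DerivXnSystem.
Context {R : numFieldType}.

Lemma derivXn_small i t : (i < t)%N -> ('X^i : {poly R})^`(t) = 0.
Proof. by move=> lt_it; rewrite derivnXn ffact_small // mulr0n. Qed.

Lemma derivXnn n : ('X^n : {poly R})^`(n) = n`!%:R.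
Proof. by rewrite derivnXn subnn ffactnn expr0. Qed.

Lemma fact_neq0 n : (n`!%:R : {poly R}) != 0.
Proof. by rewrite -polyC_natr polyC_eq0 pnatr_eq0 -lt0n fact_gt0. Qed.

Lemma sum_derivXn_trunc n (E : nat -> {poly R}) i : (i < n)%N ->
  \sum_(t < n) E t * ('X^i)^`(t) = \sum_(t < i.+1) E t * ('X^i)^`(t).
Proof.
move=> lt_in; rewrite [RHS](big_ord_widen n (fun t => E t * ('X^i)^`(t))) //.
rewrite (bigID (fun t : 'I_n => (t < i.+1)%N)) /= [X in _ + X]big1 ?addr0 //.
by move=> t; rewrite -leqNgt => lt_it; rewrite derivXn_small ?mulr0.
Qed.

Lemma derivXn_system_uniq n (E : nat -> {poly R}) :
  (forall i, (i < n)%N -> \sum_(t < i.+1) E t * ('X^i)^`(t) = 0) ->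
  forall t, (t < n)%N -> E t = 0.
Proof.
elim: n => [//|n IH] En0 t; rewrite ltnS leq_eqVlt => /orP[/eqP-> | lt_tn]; last first.
  by apply: IH => // i lt_in; apply: En0; apply: ltnW.
have := En0 n (ltnSn n); rewrite big_ord_recr big1 /= => [|s _]; last first.
  by rewrite IH ?mul0r // => i lt_in; apply: En0; apply: ltnW.
rewrite add0r derivXnn => /eqP; rewrite mulf_eq0 (negbTE (fact_neq0 n)) orbF.
by move/eqP.
Qed.

Lemma derivXn_system_exists n (b : nat -> R) : exists E : nat -> {poly R},
  (forall t, (size (E t) <= t.+1)%N) /\
  forall i, (i < n)%N -> \sum_(t < i.+1) E t * ('X^i)^`(t) = (b i)%:P.
Proof.
elim: n => [|n [E [sizeE EnP]]]; first by exists (fun=> 0); split=> // t; rewrite size_poly0.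
pose S := \sum_(t < n) E t * ('X^n)^`(t).
pose D := (n`!%:R : R)^-1 *: ((b n)%:P - S).
have sizeS : (size S <= n.+1)%N.
  apply: leq_trans (size_sum _ _ _) _; apply/bigmax_leqP => t _.
  apply: leq_trans (size_polyMleq _ _) _; rewrite derivnXn.
  apply: (@leq_trans (t.+1 + (n - t).+1).-1); last by have := ltn_ord t; lia.
  by rewrite -!subn1 leq_sub2r // leq_add // -(size_polyXn R (n - t)) size_polyMn.
exists (fun t => if t == n then D else E t); split.
  move=> t; case: eqP => [->|_]; last exact: sizeE.
  apply: leq_trans (size_scale_leq _ _) _; apply: leq_trans (size_polyD _ _) _.
  by rewrite geq_max size_polyN sizeS (leq_trans (size_polyC_leq1 _)).
move=> i; rewrite ltnS leq_eqVlt => /orP[/eqP-> | lt_in].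
  rewrite big_ord_recr /= eqxx derivXnn -/S.
  under eq_bigr => t _ do rewrite ltn_eqF //.
  rewrite mulr_natr -scaler_nat /D scalerA mulfV; last by rewrite pnatr_eq0 -lt0n fact_gt0.
  by rewrite scale1r addrC subrK.
rewrite -EnP //; apply: eq_bigr => t _; rewrite ltn_eqF //.
exact: leq_trans (ltn_ord t) lt_in.
Qed.

End DerivXnSystem.

Section Qpoly.
Context {R : numFieldType} {nu : nat}.
Implicit Type a : 'I_nu -> {poly R}.

Definition Qpoly a i := \sum_(k < nu) (a k * 'X^i)^`(k).

Lemma eq_Qpoly a a' i : a =1 a' -> Qpoly a i = Qpoly a' i.
Proof. by move=> eq_a; apply: eq_bigr => k _; rewrite eq_a. Qed.

Definition ecoef a t := \sum_(k < nu | (t <= k)%N) (a k)^`(k - t) *+ 'C(k, t).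

Lemma Qpoly_ecoef a i : (i < nu)%N ->
  Qpoly a i = \sum_(t < i.+1) ecoef a t * ('X^i)^`(t).
Proof.
move=> lt_i_nu; rewrite -(@sum_derivXn_trunc _ _ _ _ lt_i_nu) /Qpoly /ecoef.
under eq_bigr => k _ do rewrite derivnM (big_ord_widen nu
  (fun t => (a k)^`(k - t) * ('X^i)^`(t) *+ 'C(k, t))) // big_mkcond.
rewrite exchange_big /=.
under [RHS]eq_bigr => t _ do rewrite mulr_suml big_mkcond.
apply: eq_bigr => t _; apply: eq_bigr => k _ /=.
by rewrite ltnS; case: (t <= k)%N; rewrite ?mulrnAl ?mul0r.
Qed.

Lemma ecoef_head a t (lt_t_nu : (t < nu)%N) :
  ecoef a t = a (Ordinal lt_t_nu) + \sum_(k < nu | (t < k)%N) (a k)^`(k - t) *+ 'C(k, t).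
Proof.
rewrite /ecoef (bigD1 (Ordinal lt_t_nu)) //= subnn derivn0 binn; congr (_ + _).
by apply: eq_bigl => k; rewrite ltn_neqAle -val_eqE /= eq_sym andbC.
Qed.

Context {q : nat}.
Hypothesis le_q_nu : (q <= nu)%N.

Lemma ecoef_uniq a : (forall k : 'I_nu, (q <= k)%N -> a k = 0) ->
  (forall t, (t < q)%N -> ecoef a t = 0) -> forall k, a k = 0.
Proof.
move=> a_free e0; suff a0 m (k : 'I_nu) : (q - m <= k)%N -> a k = 0.
  by move=> k; apply: (a0 q); rewrite subnn.
elim: m k => [|m IH] k le_k; first by apply: a_free; rewrite subn0 in le_k.
have [|lt_k] := leqP (q - m) k; first exact: IH.
have lt_kq : (k < q)%N by move: lt_k; lia.
have := e0 k lt_kq; rewrite (ecoef_head _ _ (ltn_ord k)) big1 ?addr0.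
  by move=> <-; congr a; apply: val_inj.
by move=> k' lt_kk'; rewrite IH ?raddf0 ?mul0rn //; move: lt_k lt_kk'; lia.
Qed.

Lemma ecoef_exists r (f : 'I_nu -> {poly R}) (E : nat -> {poly R}) :
  (forall k, (size (f k) <= r)%N) -> (forall t, (t < q)%N -> (size (E t) <= r)%N) ->
  exists a, [/\ forall k, (size (a k) <= r)%N,
    forall k : 'I_nu, (q <= k)%N -> a k = f k &
    forall t, (t < q)%N -> ecoef a t = E t].
Proof.
move=> size_f size_E.
suff /(_ q) [a [size_a a_free aP]] : forall m, exists a, [/\ forall k, (size (a k) <= r)%N,
    forall k : 'I_nu, (q <= k)%N -> a k = f k &
    forall t, (q - m <= t < q)%N -> ecoef a t = E t].
  by exists a; split=> // t lt_tq; apply: aP; rewrite lt_tq andbT; lia.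
elim=> [|m [a [size_a a_free aP]]].
  by exists f; split=> // t; rewrite subn0 => /andP[/leq_ltn_trans h /h]; rewrite ltnn.
have [le_qm|lt_mq] := leqP q m.
  by exists a; split=> // t /andP[_ lt_tq]; apply: aP; rewrite lt_tq andbT; lia.
pose t0 := (q - m.+1)%N.
have lt_t0_nu : (t0 < nu)%N by rewrite /t0; lia.
pose v := E t0 - \sum_(k < nu | (t0 < k)%N) (a k)^`(k - t0) *+ 'C(k, t0).
exists (fun k => if val k == t0 then v else a k); split.
- move=> k; case: eqP => _; last exact: size_a.
  apply: leq_trans (size_polyD _ _) _; rewrite geq_max size_polyN size_E ?/t0 //=; last by lia.
  apply: leq_trans (size_sum _ _ _) _; apply/bigmax_leqP => k' _.
  by apply: leq_trans (size_polyMn _ _) _; apply: leq_trans (size_derivn _ _) _.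
- by move=> k le_qk; rewrite ifN_eq ?a_free //; apply/eqP => ek; move: le_qk; rewrite ek /t0; lia.
move=> t /andP[le_t lt_tq]; have [->|ne_t] := eqVneq t t0.
  rewrite (ecoef_head _ _ lt_t0_nu) /= eqxx /v.
  under eq_bigr => k lt_k do rewrite ifN_eq ?neq_ltn ?lt_k ?orbT //.
  by rewrite subrK.
rewrite -aP; last by apply/andP; split=> //; move: le_t ne_t; rewrite /t0; lia.
apply: eq_bigr => k le_tk; rewrite ifN_eq //.
by apply/eqP => ek; move: le_tk ne_t le_t; rewrite ek /t0; lia.
Qed.

Lemma Qpoly_uniq a : (forall k : 'I_nu, (q <= k)%N -> a k = 0) ->
  (forall i, (i < q)%N -> Qpoly a i = 0) -> forall k, a k = 0.
Proof.
move=> a_free Q0; apply: ecoef_uniq => //; apply: derivXn_system_uniq => i lt_iq.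
by rewrite -Qpoly_ecoef ?Q0 //; exact: leq_trans lt_iq le_q_nu.
Qed.

Lemma Qpoly_exists r (b : nat -> R) (f : 'I_nu -> {poly R}) : (q <= r)%N ->
  (forall k, (size (f k) <= r)%N) ->
  exists a, [/\ forall k, (size (a k) <= r)%N,
    forall k : 'I_nu, (q <= k)%N -> a k = f k &
    forall i, (i < q)%N -> Qpoly a i = (b i)%:P].
Proof.
move=> le_qr size_f; have [E [size_E EP]] := derivXn_system_exists q b.
have size_E_r t : (t < q)%N -> (size (E t) <= r)%N.
  by move=> lt_tq; apply: leq_trans (size_E t) _; lia.
have [a [size_a a_free aE]] := ecoef_exists _ _ _ size_f size_E_r.
exists a; split=> // i lt_iq; rewrite Qpoly_ecoef -?EP //; last by lia.
by apply: eq_bigr => t _; rewrite aE //; have := ltn_ord t; lia.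
Qed.

End Qpoly.

Lemma matrix_mxvec_indexP (T : Type) m n p (A B : 'M[T]_(m * n, p)) :
  (forall k l j, A (mxvec_index k l) j = B (mxvec_index k l) j) -> A = B.
Proof. by move=> eqAB; apply/matrixP => x j; case/mxvec_indexP: x => k l. Qed.

Lemma coef_sum_scaleXn (R : nzSemiRingType) n (c : 'I_n -> R) (l : 'I_n) :
  (\sum_(l' < n) c l' *: 'X^l')`_l = c l.
Proof.
rewrite coef_sum (bigD1 l) //= coefZ coefXn eqxx mulr1 big1 ?addr0 // => l' ne_l'l.
by rewrite coefZ coefXn val_eqE eq_sym (negbTE ne_l'l) mulr0.
Qed.

Section ColumnPolys.
Context {R : numFieldType} {q r nu : nat}.
Hypotheses (le_q_nu : (q <= nu)%N) (le_q_r : (q <= r)%N).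

Definition col_poly {m} (B : 'M[R]_(m * r, q)) (j : 'I_q) (k : 'I_m) : {poly R} :=
  \sum_(l < r) B (mxvec_index k l) j *: 'X^l.

Definition entry_poly (i j : 'I_q) (C : 'M[R]_(nu * r, q)) := Qpoly (col_poly C j) i.

Lemma entry_polyE i j C : entry_poly i j C =
  \sum_(k < nu) \sum_(l < r) C (mxvec_index k l) j *: ('X^(i + l))^`(k).
Proof.
apply: eq_bigr => k _; rewrite mulr_suml raddf_sum; apply: eq_bigr => l _.
by rewrite /= -scalerAl derivnZ -exprD addnC.
Qed.

Fact entry_poly_is_linear i j : linear (entry_poly i j).
Proof.
move=> c C D; rewrite !entry_polyE scaler_sumr -big_split; apply: eq_bigr => k _.
rewrite scaler_sumr -big_split; apply: eq_bigr => l _.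
by rewrite !mxE scalerDl scalerA.
Qed.

HB.instance Definition _ i j :=
  GRing.isLinear.Build R 'M[R]_(nu * r, q) {poly R} *:%R (entry_poly i j)
    (entry_poly_is_linear i j).

Definition free_row (k : 'I_(nu - q)) : 'I_nu := cast_ord (subnKC le_q_nu) (rshift q k).

Definition free_index (x : 'I_((nu - q) * r)) : 'I_(nu * r) :=
  let: (k, l) := enum_val (cast_ord (esym (mxvec_cast (nu - q) r)) x) in
  mxvec_index (free_row k) l.

Lemma free_index_mxvec k l : free_index (mxvec_index k l) = mxvec_index (free_row k) l.
Proof. by rewrite {1}/mxvec_index /free_index cast_ordK enum_rankK. Qed.

(* The coefficients of the polynomials a_q, ..., a_(nu-1) of every column. *)
Definition free_part : {linear 'M[R]_(nu * r, q) -> 'M[R]_((nu - q) * r, q)} :=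
  rowsub free_index.

Lemma col_poly_free_part C j k : col_poly (free_part C) j k = col_poly C j (free_row k).
Proof. by apply: eq_bigr => l _; rewrite mxE free_index_mxvec. Qed.

Lemma coef_col_poly {m} (B : 'M[R]_(m * r, q)) j k (l : 'I_r) :
  (col_poly B j k)`_l = B (mxvec_index k l) j.
Proof. exact: coef_sum_scaleXn. Qed.

Lemma size_col_poly {m} (B : 'M[R]_(m * r, q)) j k : (size (col_poly B j k) <= r)%N.
Proof.
apply: leq_trans (size_sum _ _ _) _; apply/bigmax_leqP => l _.
by apply: leq_trans (size_scale_leq _ _) _; rewrite size_polyXn.
Qed.

Definition mx_of_col_polys (A : 'I_q -> 'I_nu -> {poly R}) : 'M[R]_(nu * r, q) :=
  \matrix_(x, j) mxvec (\matrix_(k, l) (A j k)`_(l : 'I_r)) 0 x.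

Lemma col_poly_mx_of_col_polys (A : 'I_q -> 'I_nu -> {poly R}) j k :
  (size (A j k) <= r)%N -> col_poly (mx_of_col_polys A) j k = A j k.
Proof.
move=> size_A; apply/polyP => n; have [lt_nr|le_rn] := ltnP n r.
  by rewrite (coef_col_poly _ _ _ (Ordinal lt_nr)) !mxE mxvecE mxE.
by rewrite !nth_default //; apply: leq_trans _ le_rn; rewrite ?size_col_poly.
Qed.

Lemma free_row_onto {k : 'I_nu} : (q <= k)%N -> exists k', k = free_row k'.
Proof.
move=> le_qk; have lt_k' : (k - q < nu - q)%N by rewrite ltn_sub2r ?(leq_ltn_trans le_qk).
by exists (Ordinal lt_k'); apply: val_inj; rewrite /= subnKC.
Qed.

Definition hom_solution : pred 'M[R]_(nu * r, q) :=
  fun C => [forall i, forall j, entry_poly i j C == 0].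

Lemma hom_solution_closed a C D :
  hom_solution C -> hom_solution D -> hom_solution (a *: C + D).
Proof.
move=> /forallP homC /forallP homD; apply/forallP => i; apply/forallP => j.
by rewrite linearP /= (eqP (forallP (homC i) j)) (eqP (forallP (homD i) j)) scaler0 addr0.
Qed.

Lemma hom_solution_free_part_eq0 C : hom_solution C -> free_part C = 0 -> C = 0.
Proof.
move=> /forallP homC free0; apply: matrix_mxvec_indexP => k l j.
rewrite mxE -coef_col_poly.
suff -> : col_poly C j k = 0 by rewrite coef0.
apply: (Qpoly_uniq le_q_nu) => [k' le_qk'|i lt_iq]; last first.
  by have /forallP/(_ j)/eqP := homC (Ordinal lt_iq).
have [k'' ->] := free_row_onto le_qk'.
by rewrite -col_poly_free_part free0 /col_poly big1 // => l' _; rewrite mxE scale0r.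
Qed.

Lemma exists_entry_poly (b : nat -> nat -> R) (X : 'M[R]_((nu - q) * r, q)) :
  exists C, (forall i j : 'I_q, entry_poly i j C = (b i j)%:P) /\ free_part C = X.
Proof.
pose f j (k : 'I_nu) :=
  if split (cast_ord (esym (subnKC le_q_nu)) k) is inr k' then col_poly X j k' else 0.
have size_f j k : (size (f j k) <= r)%N.
  by rewrite /f; case: split => k'; rewrite ?size_poly0 ?size_col_poly.
have f_free j k : f j (free_row k) = col_poly X j k.
  by rewrite /f /free_row cast_ordK -[rshift q k]/(unsplit (inr k)) unsplitK.
have /fin_all_exists[A AP] (j : 'I_q) := Qpoly_exists le_q_nu r (b ^~ j) (f j) le_q_r (size_f j).
exists (mx_of_col_polys A); split.
  move=> i j; have [size_A _ AQ] := AP j.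
  by rewrite /entry_poly -AQ //; apply: eq_Qpoly => k; apply: col_poly_mx_of_col_polys.
apply: matrix_mxvec_indexP => k l j; have [size_A A_free _] := AP j.
rewrite -!coef_col_poly col_poly_free_part col_poly_mx_of_col_polys // A_free ?f_free //.
by rewrite leq_addr.
Qed.

Lemma exists_hom_solution_free_part X : exists C, hom_solution C && (free_part C == X).
Proof.
have [C [entryC freeC]] := exists_entry_poly (fun _ _ => 0) X.
by exists C; rewrite freeC eqxx andbT; apply/forallP => i; apply/forallP => j; rewrite entryC.
Qed.

End ColumnPolys.

Section LinearSection.
Context {K : fieldType} {U W : vectType K} {H : pred U} {rho : {linear U -> W}}.
Hypothesis H_closed : forall a x y, H x -> H y -> H (a *: x + y).
Hypothesis rho_inj : forall x, H x -> rho x = 0 -> x = 0.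
Hypothesis rho_onto : forall w, exists x, H x && (rho x == w).

Let H_sub x y : H x -> H y -> H (x - y).
Proof. by move=> Hx Hy; rewrite addrC -scaleN1r H_closed. Qed.

Let eq_on_H x y : H x -> H y -> rho x = rho y -> x = y.
Proof.
move=> Hx Hy eq_rho; apply/eqP; rewrite -subr_eq0; apply/eqP.
by apply: rho_inj; rewrite ?H_sub // linearB eq_rho subrr.
Qed.

Definition rho_section w : U := xchoose (rho_onto w).

Lemma rho_sectionP w : H (rho_section w) /\ rho (rho_section w) = w.
Proof. by have /andP[? /eqP] := xchooseP (rho_onto w). Qed.

Fact rho_section_is_linear : linear rho_section.
Proof.
move=> a w1 w2; have [H1 rho1] := rho_sectionP w1; have [H2 rho2] := rho_sectionP w2.
have [H12 rho12] := rho_sectionP (a *: w1 + w2).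
by apply: eq_on_H; rewrite ?H_closed // linearP rho1 rho2 rho12.
Qed.

HB.instance Definition _ := GRing.isLinear.Build K W U *:%R rho_section rho_section_is_linear.

Lemma vspace_of_linear_bijection :
  exists V : {vspace U}, \dim V = \dim {:W} /\ forall x, H x <-> x \in V.
Proof.
exists (limg (linfun rho_section)); split.
  rewrite limg_dim_eq // capfv; apply/eqP/lker0P => w1 w2; rewrite !lfunE /= => eq_w.
  by rewrite -(proj2 (rho_sectionP w1)) eq_w (proj2 (rho_sectionP w2)).
move=> x; split=> [Hx | /memv_imgP[w _ ->]]; last by rewrite lfunE; case: (rho_sectionP w).
apply/memv_imgP; exists (rho x); rewrite ?memvf // lfunE /=.
by have [Hs rho_s] := rho_sectionP (rho x); apply: eq_on_H.
Qed.

End LinearSection.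

Lemma sum_mxvec_index (V : nmodType) m n (G : 'I_(m * n) -> V) :
  \sum_(x < m * n) G x = \sum_(k < m) \sum_(l < n) G (mxvec_index k l).
Proof.
rewrite pair_big /= (reindex (uncurry (@mxvec_index m n))) /=; last exact: curry_mxvec_bij.
by apply: eq_bigr => -[k l].
Qed.

Section ConstSolution.
Variables (R : rcfType) (q r nu : nat).

Lemma M0_mulE (C : 'M[R]_(nu * r, q)) z i j :
  (M0 q r nu z *m map_mx (fun x : R => x%:C)%C C) i j =
  (map_poly (real_complex R) (entry_poly i j C)).[z].
Proof.
rewrite !mxE sum_mxvec_index entry_polyE rmorph_sum horner_sum; apply: eq_bigr => k _.
rewrite rmorph_sum horner_sum; apply: eq_bigr => l _.
rewrite !mxE mxvecE !mxE big_ord1 !mxE /= map_polyZ hornerZ mulrC; congr (_ * _).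
by rewrite -exprD !derivnXn raddfMn /= map_polyXn.
Qed.

Lemma const_solutionP (C : 'M[R]_(nu * r, q)) :
  const_solution q r nu C <-> forall i j, entry_poly i j C = (i == j)%:R%:P.
Proof.
have map_delta (i j : 'I_q) : map_poly (real_complex R) (i == j)%:R%:P = (i == j)%:R%:P.
  by rewrite map_polyC /= rmorph_nat.
split=> [solC i j|entryC z]; last first.
  by apply/matrixP => i j; rewrite M0_mulE entryC map_delta hornerC mxE.
apply: (map_poly_inj (real_complex R)); rewrite map_delta.
apply/eqP; rewrite -subr_eq0; apply/eqP; apply: poly_all_roots_eq0 => z.
by rewrite hornerD hornerN hornerC -M0_mulE solC mxE subrr.
Qed.

Lemma const_solution_hom (C0 C : 'M[R]_(nu * r, q)) : const_solution q r nu C0 ->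
  const_solution q r nu C <-> hom_solution (C - C0).
Proof.
move=> /const_solutionP solC0; rewrite const_solutionP; split=> [solC|/forallP homC i j].
  by apply/forallP => i; apply/forallP => j; rewrite linearB /= solC solC0 subrr.
by have /forallP/(_ j) := homC i; rewrite linearB /= subr_eq0 solC0 => /eqP.
Qed.

End ConstSolution.

Theorem proposition7p5 (R : realType) (q r nu : nat) :
  (0 < q)%N -> (0 < r)%N -> (0 < nu)%N -> (q < nu)%N -> (nu <= r)%N ->
  (exists C : 'M[R]_(nu * r, q), const_solution q r nu C) /\
  affine_of_dim ((nu - q) * r * q)%N
    (fun C : 'M[R]_(nu * r, q) => const_solution q r nu C).
Proof.
move=> _ _ _ lt_q_nu le_nu_r; have le_q_nu := ltnW lt_q_nu.
have le_q_r := leq_trans le_q_nu le_nu_r.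
have [C0 [entryC0 _]] := exists_entry_poly le_q_nu le_q_r (fun i j => (i == j)%:R : R) 0.
have solC0 : const_solution q r nu C0 by apply/const_solutionP.
split; first by exists C0.
have [V [dimV memV]] := vspace_of_linear_bijection (@hom_solution_closed R q r nu)
  (hom_solution_free_part_eq0 le_q_nu) (exists_hom_solution_free_part le_q_nu le_q_r).
exists C0, V; split; first by rewrite dimV dimvf dim_matrix.
by move=> C; rewrite -memV; exact: const_solution_hom.
Qed.
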